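(* Let $\mathbb{X}$ be a reflexive Kadets-Klee real Banach space and $\mathbb{Y}$ any real Banach space (both of dimension greater than $1$). Then the pair $(\mathbb{X},\mathbb{Y})$ has sBPBp for compact operators.
   Context: $S_{\mathbb{X}}$ is the unit sphere. $\mathbb{X}$ is Kadets-Klee if $x_n\to x$ weakly and $\|x_n\|\to\|x\|$ imply $\|x_n-x\|\to0$. The pair $(\mathbb{X},\mathbb{Y})$ has sBPBp for compact operators if for every $\epsilon>0$ and every compact linear operator $T:\mathbb{X}\to\mathbb{Y}$ with $\|T\|=1$ there exists $\eta(\epsilon,T)>0$ such that whenever $x_0\in S_{\mathbb{X}}$ satisfies $\|Tx_0\|>1-\eta(\epsilon,T)$, there exists $x_1\in S_{\mathbb{X}}$ with $\|Tx_1\|=1$ and $\|x_1-x_0\|<\epsilon$. *)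

(* Real Banach spaces = completeNormedModType R, R : realType. *)
From HB Require Import structures.
From mathcomp Require Import all_boot all_order all_algebra.
From mathcomp Require Import all_classical all_reals all_analysis.
Set Implicit Arguments. Unset Strict Implicit. Unset Printing Implicit Defensive.
Import Order.TTheory GRing.Theory Num.Theory.
Import numFieldNormedType.Exports.
Local Open Scope classical_set_scope.
Local Open Scope ring_scope.

Section Defs.
Variable R : realType.

Definition is_linear (U V : lmodType R) (T : U -> V) : Prop :=
  forall (a : R) (x y : U), T (a *: x + y) = a *: T x + T y.

Definition dual_elt (X : normedModType R) (f : X -> R) : Prop :=
  is_linear (f : X -> R^o) /\ continuous f.

Definition weak_cvg (X : normedModType R) (u : nat -> X) (x : X) : Prop :=
  forall f : X -> R, dual_elt f -> (fun n => f (u n)) @ \oo --> f x.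

Definition kadets_klee (X : normedModType R) : Prop :=
  forall (u : nat -> X) (x : X), weak_cvg u x ->
    (fun n => `|u n|) @ \oo --> `|x| ->
    (fun n => `|u n - x|) @ \oo --> 0%R.

(* a bounded linear functional on the dual of X (an element of the bidual):
   linear on the dual and |phi f| <= C ||f|| (written without the dual norm:
   whenever |f x| <= M ||x|| for all x, |phi f| <= C M) *)
Definition bidual_elt (X : normedModType R) (phi : (X -> R) -> R) : Prop :=
  (forall (a : R) (f g : X -> R), dual_elt f -> dual_elt g ->
     phi (fun x => a * f x + g x) = a * phi f + phi g) /\
  exists C : R, forall (f : X -> R) (M : R), dual_elt f ->
     (forall x, `|f x| <= M * `|x|) -> `|phi f| <= C * M.

Definition reflexive_space (X : normedModType R) : Prop :=
  forall phi : (X -> R) -> R, bidual_elt phi ->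
    exists x : X, forall f : X -> R, dual_elt f -> phi f = f x.

Definition dim_gt1 (X : normedModType R) : Prop :=
  exists x y : X, forall a b : R, a *: x + b *: y = 0 -> a = 0 /\ b = 0.

Definition compact_operator (X Y : normedModType R) (T : X -> Y) : Prop :=
  is_linear T /\ compact (closure (T @` [set x : X | `|x| <= 1])).

Definition opnorm (X Y : normedModType R) (T : X -> Y) : R :=
  sup [set `|T x| | x in [set x : X | `|x| <= 1]].

Definition sBPBp_compact (X Y : normedModType R) : Prop :=
  forall eps : R, 0 < eps ->
  forall T : X -> Y, compact_operator T -> opnorm T = 1 ->
  exists eta : R, 0 < eta /\
    forall x0 : X, `|x0| = 1 -> `|T x0| > 1 - eta ->
      exists x1 : X, `|x1| = 1 /\ `|T x1| = 1 /\ `|x1 - x0| < eps.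

End Defs.

(* If the property failed for a compact T and some eps, there would be unit
   vectors x_n with |T x_n| -> 1, each at distance >= eps from every unit
   vector at which T attains its norm.  By reflexivity (Eberlein-Smulian, which
   follows from Hahn-Banach and ultrafilter limits) a subsequence converges
   weakly to some x with |x| <= 1.  Compactness of T makes T x_n converge in
   norm along an ultrafilter, necessarily to T x, so |T x| = 1 and |x| = 1.
   The Kadets-Klee property upgrades x_n -> x to norm convergence, so x is a
   norm-attaining unit vector closer than eps to some x_n. *)

From HB Require Import structures.
From mathcomp Require Import all_boot all_order all_algebra.
From mathcomp Require Import all_classical all_reals all_analysis.
From mathcomp Require Import ring lra.
Set Implicit Arguments. Unset Strict Implicit. Unset Printing Implicit Defensive.
Import Order.TTheory GRing.Theory Num.Theory.
Import numFieldNormedType.Exports.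
Local Open Scope classical_set_scope.
Local Open Scope ring_scope.

Section LinearMaps.
Context {R : realType} {U V : lmodType R} (T : U -> V).
Hypothesis linT : is_linear T.

Lemma is_linearD x y : T (x + y) = T x + T y.
Proof. by have := linT 1 x y; rewrite !scale1r. Qed.

Lemma is_linear0 : T 0 = 0.
Proof. by apply: (addrI (T 0)); rewrite addr0 -is_linearD addr0. Qed.

Lemma is_linearZ (c : R) x : T (c *: x) = c *: T x.
Proof. by have := linT c x 0; rewrite !addr0 is_linear0 addr0. Qed.

Lemma is_linearN x : T (- x) = - T x.
Proof. by rewrite -scaleN1r is_linearZ scaleN1r. Qed.

Lemma is_linearB x y : T (x - y) = T x - T y.
Proof. by rewrite is_linearD is_linearN. Qed.

End LinearMaps.

(** * The Hahn-Banach theorem *)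

Section HahnBanach.
Context {R : realType} {V : lmodType R}.
Implicit Types (p q : V -> R) (a x y : V).

Definition sublinear p :=
  (forall x y, p (x + y) <= p x + p y) /\
  (forall (c : R) x, 0 <= c -> p (c *: x) = c * p x).

Lemma sublinear0 p : sublinear p -> p 0 = 0.
Proof. by move=> hp; rewrite -(scale0r 0) hp.2 // mul0r. Qed.

Lemma sublinear_geN p x : sublinear p -> - p (- x) <= p x.
Proof.
move=> hp; rewrite -subr_ge0 opprK.
by have := hp.1 x (- x); rewrite subrr sublinear0.
Qed.

(* Zorn's lemma produces a sublinear [q <= p] with [q = ray_inf q a] for all
   [a]; for such a [q] the case [t = 1] gives [q x + q a <= q (x + a)]. *)
Definition ray_inf q a x : R :=
  inf [set q (x + t *: a) - t * q a | t in [set t : R | 0 <= t]].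

Lemma ray_inf_le q a x t : sublinear q -> 0 <= t ->
  ray_inf q a x <= q (x + t *: a) - t * q a.
Proof.
move=> hq t0; apply: ge_inf; last by exists t.
exists (- q (- x)) => _ [s s0 <-].
have := hq.1 (x + s *: a) (- x); rewrite addrC addKr (hq.2 _ _ s0); lra.
Qed.

Lemma le_ray_inf q a x b :
  (forall t, 0 <= t -> b <= q (x + t *: a) - t * q a) -> b <= ray_inf q a x.
Proof.
move=> hb; apply: lb_le_inf; first by eexists; exists 0; rewrite /= ?lexx.
by move=> _ [s s0 <-]; apply: hb.
Qed.

Lemma ray_inf_le_self q a x : sublinear q -> ray_inf q a x <= q x.
Proof.
by move=> hq; have := ray_inf_le a x hq (lexx 0); rewrite scale0r addr0 mul0r subr0.
Qed.

Lemma sublinear_ray_inf q a : sublinear q -> sublinear (ray_inf q a).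
Proof.
move=> hq; split=> [x y|c x].
  rewrite -lerBlDl; apply: le_ray_inf => s s0.
  rewrite lerBlDl -lerBlDr; apply: le_ray_inf => t t0; rewrite lerBlDr.
  apply: le_trans (ray_inf_le a (x + y) hq (addr_ge0 t0 s0)) _.
  have := hq.1 (x + t *: a) (y + s *: a); rewrite addrACA -scalerDl; lra.
rewrite le_eqVlt => /orP[/eqP <-|c0].
  rewrite scale0r mul0r; apply/eqP; rewrite eq_le; apply/andP; split.
    have := ray_inf_le a 0 hq (lexx 0).
    by rewrite scale0r !addr0 mul0r subr0 (sublinear0 hq).
  by apply: le_ray_inf => t t0; rewrite add0r (hq.2 _ _ t0) subrr.
apply/eqP; rewrite eq_le; apply/andP; split.
  rewrite -ler_pdivrMl //; apply: le_ray_inf => t t0; rewrite ler_pdivrMl //.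
  apply: le_trans (ray_inf_le a (c *: x) hq (mulr_ge0 (ltW c0) t0)) _.
  rewrite -scalerA -scalerDr (hq.2 _ _ (ltW c0)); lra.
apply: le_ray_inf => t t0.
have := ray_inf_le a x hq (divr_ge0 t0 (ltW c0)); rewrite -(ler_pM2l c0) => h.
apply: le_trans h _.
have e : c * (t / c) = t by rewrite mulrCA divff ?gt_eqF // mulr1.
rewrite mulrBr -(hq.2 _ _ (ltW c0)) scalerDr scalerA e mulrA e; lra.
Qed.

Lemma sublinear_min_is_linear q : sublinear q ->
  (forall a x, q x <= ray_inf q a x) -> is_linear (q : V -> R^o).
Proof.
move=> hq hmin.
have qD x y : q (x + y) = q x + q y.
  apply/eqP; rewrite eq_le hq.1 /=.
  have := le_trans (hmin y x) (ray_inf_le y x hq ler01).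
  by rewrite scale1r mul1r lerBrDr.
have qN x : q (- x) = - q x.
  by apply/eqP; rewrite -addr_eq0 addrC -qD subrr sublinear0.
move=> c x y; rewrite qD; congr (_ + _).
have [c0|c0] := leP 0 c; first exact: hq.2.
have := hq.2 (- c) (- x); rewrite oppr_ge0 ltW // => /(_ isT).
by rewrite scaleNr scalerN opprK qN mulrN mulNr opprK.
Qed.

Definition pointwise_inf (A : set (V -> R)) x : R := inf [set q x | q in A].

Section ChainInf.
Variables (p : V -> R) (A : set (V -> R)).
Hypothesis A_sublinear : forall q, A q -> sublinear q /\ forall x, q x <= p x.
Hypothesis A_chain : forall q1 q2, A q1 -> A q2 ->
  (forall x, q1 x <= q2 x) \/ (forall x, q2 x <= q1 x).
Variables (q0 : V -> R).
Hypothesis A_q0 : A q0.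

Lemma pointwise_inf_le q x : A q -> pointwise_inf A x <= q x.
Proof.
move=> Aq; apply: ge_inf; last by exists q.
exists (- p (- x)) => _ [q' Aq' <-]; have [hq' q'p] := A_sublinear Aq'.
by apply: le_trans (sublinear_geN x hq'); rewrite lerN2.
Qed.

Lemma le_pointwise_inf x b : (forall q, A q -> b <= q x) -> b <= pointwise_inf A x.
Proof.
move=> hb; apply: lb_le_inf; first by exists (q0 x), q0.
by move=> _ [q Aq <-]; apply: hb.
Qed.

Lemma sublinear_pointwise_inf : sublinear (pointwise_inf A).
Proof.
have [hq0 _] := A_sublinear A_q0.
split=> [x y|c x].
  rewrite -lerBlDl; apply: le_pointwise_inf => q2 Aq2.
  rewrite lerBlDl -lerBlDr; apply: le_pointwise_inf => q1 Aq1; rewrite lerBlDr.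
  have [[hq1 _] [hq2 _]] := (A_sublinear Aq1, A_sublinear Aq2).
  have [q12|q21] := A_chain Aq1 Aq2.
    apply: le_trans (pointwise_inf_le _ Aq1) (le_trans (hq1.1 x y) _).
    by rewrite lerD2l; apply: q12.
  apply: le_trans (pointwise_inf_le _ Aq2) (le_trans (hq2.1 x y) _).
  by rewrite lerD2r; apply: q21.
rewrite le_eqVlt => /orP[/eqP <-|c0].
  rewrite scale0r mul0r; apply/eqP; rewrite eq_le; apply/andP; split.
    by apply: le_trans (pointwise_inf_le _ A_q0) _; rewrite sublinear0.
  by apply: le_pointwise_inf => q Aq; rewrite sublinear0 //; case: (A_sublinear Aq).
apply/eqP; rewrite eq_le; apply/andP; split.
  rewrite -ler_pdivrMl //; apply: le_pointwise_inf => q Aq; rewrite ler_pdivrMl //.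
  have [hq _] := A_sublinear Aq; rewrite -(hq.2 _ _ (ltW c0)).
  exact: pointwise_inf_le.
apply: le_pointwise_inf => q Aq; have [hq _] := A_sublinear Aq.
by rewrite (hq.2 _ _ (ltW c0)) ler_pM2l // pointwise_inf_le.
Qed.

End ChainInf.

Lemma sublinear_linear_minorant p : sublinear p ->
  exists f : V -> R, is_linear (f : V -> R^o) /\ forall x, f x <= p x.
Proof.
move=> hp.
pose T := {q : V -> R | sublinear q /\ forall x, q x <= p x}.
pose above (q1 q2 : T) := `[< forall x, sval q2 x <= sval q1 x >].
have [t tmax] : exists t, premaximal above t.
  have p_below : sublinear p /\ forall x, p x <= p x by [].
  apply: (ZL_preorder (exist _ p p_below)) => [q|q1 q2 q3|B Bchain].
  - exact/asboolP.
  - by move=> /asboolP h12 /asboolP h23; apply/asboolP => x; apply: le_trans (h12 x).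
  have [[q0 Bq0]|B0] := pselect (B !=set0); last first.
    by exists (exist _ p p_below) => q Bq; case: B0; exists q.
  pose A := sval @` B.
  have A_sub q : A q -> sublinear q /\ forall x, q x <= p x.
    by move=> [s _ <-]; exact: (svalP s).
  have A_chain q1 q2 : A q1 -> A q2 ->
      (forall x, q1 x <= q2 x) \/ (forall x, q2 x <= q1 x).
    case=> [s1 Bs1 <-] [s2 Bs2 <-].
    by case: (Bchain _ _ Bs1 Bs2) => /asboolP; [right|left].
  have Aq0 : A (sval q0) by exists q0.
  have m_below : sublinear (pointwise_inf A) /\ forall x, pointwise_inf A x <= p x.
    split; first exact: (@sublinear_pointwise_inf p A A_sub A_chain (sval q0) Aq0).
    move=> x; apply: le_trans (pointwise_inf_le A_sub _ Aq0) _.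
    by case: (svalP q0) => _; apply.
  exists (exist _ (pointwise_inf A) m_below) => s Bs; apply/asboolP => x /=.
  by apply: (@pointwise_inf_le p A A_sub (sval s) x); exists s.
have [hq qp] := svalP t.
exists (sval t); split=> //; apply: sublinear_min_is_linear => // a x.
have ray_below : sublinear (ray_inf (sval t) a) /\ forall x, ray_inf (sval t) a x <= p x.
  split; first exact: sublinear_ray_inf.
  by move=> y; apply: le_trans (ray_inf_le_self _ _ hq) (qp y).
have ray_le y : ray_inf (sval t) a y <= sval t y by exact: ray_inf_le_self.
by have /asboolP := tmax (exist _ (ray_inf (sval t) a) ray_below) (asboolT ray_le); apply.
Qed.

Theorem hahn_banach p x0 : sublinear p ->
  exists f : V -> R, is_linear (f : V -> R^o) /\ (forall x, f x <= p x) /\ f x0 = p x0.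
Proof.
move=> hp; have [f [linf fp]] := sublinear_linear_minorant (sublinear_ray_inf x0 hp).
have f_le_p x : f x <= p x by apply: le_trans (fp x) (ray_inf_le_self _ _ hp).
exists f; split=> //; split=> //.
apply/eqP; rewrite eq_le f_le_p /=.
have := le_trans (fp (- x0)) (ray_inf_le x0 (- x0) hp ler01).
rewrite scale1r addNr sublinear0 // mul1r sub0r (is_linearN linf).
by rewrite lerN2.
Qed.

End HahnBanach.

Section Functionals.
Context {R : realType} {X : normedModType R}.
Implicit Types (f : X -> R) (x y : X).

Lemma is_linear_bounded_continuous {Y : normedModType R} (T : X -> Y) (K : R) :
  is_linear T -> (forall x, `|T x| <= K * `|x|) -> continuous T.
Proof.
move=> linT hK x; apply/cvgrPdist_lt => e e0.
have K1 : 0 < `|K| + 1 by rewrite ltr_pwDr // normr_ge0.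
apply/nbhs_ballP; exists (e / (`|K| + 1)); first by rewrite /= divr_gt0.
move=> y; rewrite -ball_normE /= -(is_linearB linT) => hy.
apply: le_lt_trans (hK _) _; apply: (@le_lt_trans _ _ ((`|K| + 1) * `|x - y|)).
  by apply: ler_wpM2r => //; apply: le_trans (ler_norm K) _; rewrite lerDl.
by rewrite -ltr_pdivlMl // mulrC.
Qed.

Section DualElt.
Variables (f : X -> R) (df : dual_elt f).

Lemma dual0 : f 0 = 0. Proof. exact: (is_linear0 df.1). Qed.
Lemma dualZ c x : f (c *: x) = c * f x. Proof. exact: (is_linearZ df.1 c x). Qed.
Lemma dualD x y : f (x + y) = f x + f y. Proof. exact: (is_linearD df.1 x y). Qed.
Lemma dualN x : f (- x) = - f x. Proof. exact: (is_linearN df.1 x). Qed.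
Lemma dualB x y : f (x - y) = f x - f y. Proof. exact: (is_linearB df.1 x y). Qed.

Lemma dual_bounded : exists2 M, 0 <= M & forall x, `|f x| <= M * `|x|.
Proof.
have /cvgrPdist_lt /(_ 1 ltr01) /nbhs_ballP [d /= d0 hd] := df.2 0.
exists (2 / d) => [|x]; first by rewrite divr_ge0 // ltW.
have [->|x0] := eqVneq x 0; first by rewrite dual0 !normr0 mulr0.
have nx : 0 < `|x| by rewrite normr_gt0.
have k0 : 0 <= d / 2 / `|x| by rewrite !divr_ge0 // ltW.
have : ball (0 : X) d ((d / 2 / `|x|) *: x).
  rewrite -ball_normE /= sub0r normrN normrZ ger0_norm // divfK ?gt_eqF //; lra.
move=> /hd; rewrite /= dual0 sub0r normrN dualZ normrM ger0_norm // => h.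
have -> : `|f x| = (2 * `|x| / d) * (d / 2 / `|x| * `|f x|) by field; rewrite ?gt_eqF.
apply: le_trans (ler_wpM2l _ (ltW h)) _; first by rewrite !mulr_ge0 // ?invr_ge0 ltW.
by rewrite mulr1 mulrAC.
Qed.

End DualElt.

Lemma sublinear_norm : sublinear (fun x : X => `|x|).
Proof. by split=> [x y|c x c0]; [exact: ler_normD|rewrite normrZ ger0_norm]. Qed.

Lemma dual_hahn_banach (p : X -> R) x0 : sublinear p -> (forall x, p x <= `|x|) ->
  exists f, [/\ dual_elt f, forall x, f x <= p x, f x0 = p x0 & forall x, `|f x| <= `|x|].
Proof.
move=> hp p_le; have [f [linf [fp fx0]]] := hahn_banach x0 hp.
have f_le x : `|f x| <= `|x|.
  rewrite ler_norml (le_trans (fp x) (p_le x)) andbT lerNl.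
  by rewrite -(is_linearN linf) -normrN; apply: le_trans (fp _) (p_le _).
exists f; split=> //; split=> //.
by apply: (@is_linear_bounded_continuous _ _ 1) => // x; rewrite mul1r.
Qed.

Lemma norming_functional z :
  exists f, [/\ dual_elt f, f z = `|z| & forall x, `|f x| <= `|x|].
Proof.
have [f [df _ fz fb]] := dual_hahn_banach z sublinear_norm (fun x => lexx _).
by exists f.
Qed.

End Functionals.

(** * Reflexivity and weak sequential compactness *)

Lemma ultra_compact_lim {I : Type} {T : topologicalType} (W : set_system I)
    (K : set T) (g : I -> T) :
  UltraFilter W -> compact K -> (forall i, K (g i)) -> exists2 y, K y & g @ W --> y.
Proof.
move=> WU cK Kg.
have WK : (g @ W) K by apply: filterS (fun i _ => Kg i) (@filterT _ W _).
have [y [Ky cy]] := cK (g @ W) _ WK.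
exists y => // N yN; have [//|WnN] := in_ultra_setVsetC (g @^-1` N) WU.
by have [z []] := cy (~` N) N WnN yN.
Qed.

Lemma ultra_lim_bounded {R : realType} {I : Type} (W : set_system I) (a : I -> R)
    (M : R) :
  UltraFilter W -> (forall i, `|a i| <= M) -> exists2 L, `|L| <= M & a @ W --> L.
Proof.
move=> WU aM; have inM (r : R) : (r \in `[- M, M]) = (`|r| <= M).
  by rewrite in_itv /= ler_norml.
have aK i : [set` `[- M, M]] (a i) by rewrite /= inM.
have [L] := ultra_compact_lim WU (@segment_compact R (- M) M) aK.
by rewrite /= inM; exists L.
Qed.

Section Reflexive.
Context {R : realType} {X : normedModType R}.

Lemma reflexive_ultra_weak_lim {I : Type} (W : set_system I) (v : I -> X) :
  reflexive_space X -> (exists z : X, z != 0) -> UltraFilter W ->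
  (forall i, `|v i| <= 1) ->
  exists y, forall f, dual_elt f -> (fun i => f (v i)) @ W --> f y.
Proof.
move=> reflX [z z0] WU v1.
have bounded_lim (f : X -> R) (M : R) : 0 <= M -> (forall x, `|f x| <= M * `|x|) ->
    exists2 L, `|L| <= M & (fun i => f (v i)) @ W --> L.
  move=> M0 fM; apply: ultra_lim_bounded => i.
  by apply: le_trans (fM _) _; rewrite ler_piMr.
pose phi (f : X -> R) : R := lim ((fun i => f (v i)) @ W).
have phiE f : dual_elt f -> (fun i => f (v i)) @ W --> phi f.
  move=> df; have [M M0 fM] := dual_bounded df.
  by have [L _ fL] := bounded_lim _ _ M0 fM; rewrite /phi (cvg_lim _ fL).
have bid_phi : bidual_elt phi.
  split=> [a f g df dg|].
    by apply: cvg_lim => //; apply: cvgD; [apply: cvgMl_tmp|]; exact: phiE.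
  exists 1 => f M df fM.
  have M0 : 0 <= M.
    have nz : 0 < `|z| by rewrite normr_gt0.
    by rewrite -(pmulr_lge0 _ nz) (le_trans _ (fM z)).
  have [L LM fL] := bounded_lim _ _ M0 fM.
  by rewrite mul1r /phi (cvg_lim _ fL).
have [y hy] := reflX phi bid_phi.
by exists y => f df; rewrite -hy //; exact: phiE.
Qed.

End Reflexive.

Section SpanDistance.
Context {R : realType} {X : normedModType R} (u : nat -> X).

Inductive in_span : X -> Prop :=
| span0 : in_span 0
| spanS (c : R) (i : nat) (z : X) : in_span z -> in_span (c *: u i + z).

Lemma in_spanD z1 z2 : in_span z1 -> in_span z2 -> in_span (z1 + z2).
Proof.
elim=> [|c i w _ IH] h2; first by rewrite add0r.
by rewrite -addrA; apply: spanS; exact: IH.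
Qed.

Lemma in_spanZ a z : in_span z -> in_span (a *: z).
Proof.
elim=> [|c i w _ IH]; first by rewrite scaler0; exact: span0.
by rewrite scalerDr scalerA; apply: spanS.
Qed.

Lemma in_spanN z : in_span z -> in_span (- z).
Proof. by rewrite -scaleN1r; apply: in_spanZ. Qed.

Lemma in_span_gen i : in_span (u i).
Proof. by rewrite -[u i]addr0 -[u i]scale1r; apply: spanS; exact: span0. Qed.

Definition span_dist (w : X) : R := inf [set `|w - s| | s in in_span].

Lemma span_dist_le w s : in_span s -> span_dist w <= `|w - s|.
Proof. by move=> hs; apply: ge_inf; [exists 0 => _ [t _ <-]|exists s]. Qed.

Lemma le_span_dist w b : (forall s, in_span s -> b <= `|w - s|) -> b <= span_dist w.
Proof.
move=> hb; apply: lb_le_inf; first by exists `|w - 0|, 0 => //; exact: span0.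
by move=> _ [t ht <-]; apply: hb.
Qed.

Lemma span_dist_le_norm w : span_dist w <= `|w|.
Proof. by have := span_dist_le w span0; rewrite subr0. Qed.

Lemma span_dist_span s : in_span s -> span_dist s = 0.
Proof.
move=> hs; apply/eqP; rewrite eq_le (le_span_dist (fun _ _ => normr_ge0 _)) andbT.
by have := span_dist_le s hs; rewrite subrr normr0.
Qed.

Lemma sublinear_span_dist : sublinear span_dist.
Proof.
split=> [x y|c x].
  rewrite -lerBlDl; apply: le_span_dist => s2 h2.
  rewrite lerBlDl -lerBlDr; apply: le_span_dist => s1 h1; rewrite lerBlDr.
  apply: le_trans (span_dist_le _ (in_spanD h1 h2)) _.
  by rewrite opprD addrACA; exact: ler_normD.
rewrite le_eqVlt => /orP[/eqP <-|c0].
  by rewrite scale0r mul0r span_dist_span //; exact: span0.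
apply/eqP; rewrite eq_le; apply/andP; split.
  rewrite -ler_pdivrMl //; apply: le_span_dist => s hs; rewrite ler_pdivrMl //.
  apply: le_trans (span_dist_le _ (in_spanZ c hs)) _.
  by rewrite -scalerBr normrZ gtr0_norm.
apply: le_span_dist => s hs.
have := span_dist_le x (in_spanZ c^-1 hs); rewrite -(ler_pM2l c0) => h.
apply: le_trans h _.
by rewrite -{1}(gtr0_norm c0) -normrZ scalerBr scalerA divff ?gt_eqF // scale1r.
Qed.

Lemma span_dist_eq0_approx w e : span_dist w = 0 -> 0 < e ->
  exists2 s, in_span s & `|w - s| < e.
Proof.
move=> w0 e0; have : span_dist w < e by rewrite w0.
case/inf_lt; first by exists `|w - 0|, 0 => //; exact: span0.
by move=> _ [s hs <-]; exists s.
Qed.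

Lemma span_dist_weak_lim {I : Type} (W : set_system I) (v : I -> X) (y : X) :
  ProperFilter W -> (forall i, in_span (v i)) ->
  (forall f, dual_elt f -> (fun i => f (v i)) @ W --> f y) -> span_dist y = 0.
Proof.
move=> PW vspan wy.
have [f [df fd fy _]] := dual_hahn_banach y sublinear_span_dist span_dist_le_norm.
have f_span s : in_span s -> f s = 0.
  move=> hs; apply/eqP; rewrite eq_le; apply/andP; split.
    by apply: le_trans (fd s) _; rewrite span_dist_span.
  by have := fd (- s); rewrite dualN // span_dist_span ?oppr_le0 //; exact: in_spanN.
have fv0 : (fun i => f (v i)) = fun=> 0 by apply/funext => i; exact: f_span.
have := wy f df; rewrite fv0 => /(cvg_unique (@Rhausdorff R) (@cvg_cst _ (0 : R) _ W _)).
by rewrite fy.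
Qed.

(* The list [s] encodes the rational combination in which each entry
   [((i, N), k)] contributes [k / (N + 1) * u i]. *)
Definition qcomb (s : seq ((nat * nat) * int)) : X :=
  foldr (fun t z => ((t.2)%:~R / (t.1.2).+1%:R) *: u t.1.1 + z) 0 s.

Definition qcomb_enum (m : nat) : X :=
  if unpickle m is Some s then qcomb s else 0.

Lemma qcomb_enum_dense z e : in_span z -> 0 < e -> exists m, `|z - qcomb_enum m| < e.
Proof.
move=> hz; suff : forall e, 0 < e -> exists s, `|z - qcomb s| < e.
  by move=> /(_ e) h /h [s hs]; exists (pickle s); rewrite /qcomb_enum pickleK.
elim: hz {e} => [|c i w _ IH] e e0; first by exists [::]; rewrite /= subr0 normr0.
have [s hs] := IH _ (divr_gt0 e0 (ltr0n _ 2)).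
pose N := Num.truncn (2 * `|u i| / e).
pose k := Num.floor (c * N.+1%:R).
exists (((i, N), k) :: s) => /=; set q := _ / _.
have N0 : 0 < N.+1%:R :> R by rewrite ltr0n.
have q_le : 0 <= c - q.
  by rewrite subr_ge0 /q /= ler_pdivrMr //; exact: real_floor_le (num_real _).
have q_gt : c - q < N.+1%:R^-1.
  have hk := real_floorD1_gt (num_real (c * N.+1%:R)).
  rewrite rmorphD rmorph1 -/k in hk.
  have -> : c - q = (c * N.+1%:R - k%:~R) / N.+1%:R by rewrite /q /=; field; rewrite gt_eqF.
  rewrite -[X in _ < X]mul1r ltr_pM2r ?invr_gt0 //; lra.
have hN : 2 * `|u i| / e < N.+1%:R by exact: truncnS_gt.
have hu : (c - q) * `|u i| < e / 2.
  apply: (@le_lt_trans _ _ (`|u i| / N.+1%:R)); first by rewrite mulrC ler_wpM2l // ltW.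
  by rewrite ltr_pdivrMr //; move: hN; rewrite ltr_pdivrMr //; lra.
rewrite opprD addrACA -scalerBl.
by apply: le_lt_trans (ler_normD _ _) _; rewrite normrZ ger0_norm //; lra.
Qed.

(* If [g_m] vanishes on [y1 - y2] and [qcomb_enum m] is close to [y1 - y2],
   then [|qcomb_enum m| = g_m (qcomb_enum m)] is small as well, hence so is
   [|y1 - y2|]. *)
Lemma norming_seq_separates (g : nat -> X -> R) :
  (forall m, [/\ dual_elt (g m), g m (qcomb_enum m) = `|qcomb_enum m|
                & forall x, `|g m x| <= `|x|]) ->
  forall y1 y2, span_dist y1 = 0 -> span_dist y2 = 0 ->
  (forall m, g m y1 = g m y2) -> y1 = y2.
Proof.
move=> hg y1 y2 h1 h2 gy; apply/eqP; rewrite -subr_eq0; apply/negPn/negP => y12.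
set d := `|y1 - y2|; have d0 : 0 < d by rewrite normr_gt0.
have e0 : 0 < d / 8 by rewrite divr_gt0.
have [s1 hs1 c1] := span_dist_eq0_approx h1 e0.
have [s2 hs2 c2] := span_dist_eq0_approx h2 e0.
have [m cm] := qcomb_enum_dense (in_spanD hs1 (in_spanN hs2)) e0.
have [dg gq gb] := hg m; set q := qcomb_enum m in cm gq.
have close : `|y1 - y2 - q| < 3 * (d / 8).
  apply: le_lt_trans (ler_distD (s1 - s2) _ _) _.
  have -> : y1 - y2 - (s1 - s2) = (y1 - s1) - (y2 - s2).
    by rewrite !opprB addrACA [in RHS]addrACA [- y2 + _]addrC.
  have := ler_normB (y1 - s1) (y2 - s2); lra.
have small : `|q| < 3 * (d / 8).
  rewrite -gq -(subrK (y1 - y2) q) dualD // dualB // gy subrr addr0.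
  by apply: le_lt_trans (ler_norm _) (le_lt_trans (gb _) _); rewrite distrC.
have := ler_normD (y1 - y2 - q) q; rewrite subrK -/d; lra.
Qed.

End SpanDistance.

Lemma ultra_diagonal_subseq {R : realType} (U : set_system nat)
    (a : nat -> nat -> R) (l : nat -> R) :
  ProperFilter U -> \oo `<=` U -> (forall j, a j @ U --> l j) ->
  exists phi : nat -> nat, (forall k, (k <= phi k)%N) /\
    forall j, (fun k => a j (phi k)) @ \oo --> l j.
Proof.
move=> PU oU al.
pose close k n := forall j : 'I_k.+1, `|l j - a j n| < k.+1%:R^-1.
have closeU k : \forall n \near U, close k n.
  by apply: filter_forall => j; apply: cvgr_dist_lt; [exact: al|rewrite invr_gt0 ltr0n].
have next (km : nat * nat) : exists n, close km.1 n /\ (km.2 < n)%N.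
  have gtU : \forall n \near U, (km.2 < n)%N by apply: oU; exists km.2.+1.
  by have [n []] := filter_ex (filterI (closeU km.1) gtU); exists n.
have [nx hnx] := choice next.
pose phi := fix phi k := if k is k'.+1 then nx (k, phi k') else nx (0, 0)%N.
have phi_close k : close k (phi k).
  by case: k => [|k]; [exact: (hnx (0, 0)%N).1|exact: (hnx (k.+1, phi k)).1].
have phi_gt k : (k < phi k)%N.
  elim: k => [|k IH]; first exact: (hnx (0, 0)%N).2.
  exact: leq_ltn_trans IH (hnx (k.+1, phi k)).2.
exists phi; split=> [k|j]; first exact: ltnW.
apply/cvgrPdist_lt => e e0; exists (maxn j (Num.truncn e^-1)) => // k /=.
rewrite geq_max => /andP[jk ek]; have jk1 : (j < k.+1)%N by rewrite ltnS.
apply: lt_le_trans (phi_close k (Ordinal jk1)) _.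
rewrite -[leRHS]invrK lef_pV2 ?posrE ?invr_gt0 ?ltr0n //.
by apply/ltW/(lt_le_trans (truncnS_gt _)); rewrite ler_nat.
Qed.

Lemma not_cvg_far_ultra {R : realType} (a : nat -> R) (l : R) :
  ~ (a @ \oo --> l) -> exists2 eps, 0 < eps &
    exists W, [/\ UltraFilter W, \oo `<=` W & W [set k | eps <= `|l - a k|]].
Proof.
move=> ncvg.
have [eps [eps0 not_near]] : exists eps, 0 < eps /\ ~ \forall k \near \oo, `|l - a k| < eps.
  apply: contrapT => H; apply: ncvg; apply/cvgrPdist_lt => eps eps0.
  by apply: contrapT => Hn; apply: H; exists eps.
pose far k := eps <= `|l - a k|.
have PF : ProperFilter (within far \oo).
  apply: Build_ProperFilter_ex => P hP; apply: contrapT => nP; apply: not_near.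
  have farP : \forall k \near \oo, far k -> P k := hP.
  apply: filterS farP => k Pk; rewrite ltNge; apply/negP => fk.
  by apply: nP; exists k; exact: Pk.
have [W [WU sW]] := ultraFilterLemma PF.
exists eps => //; exists W; split=> //; last by apply: sW; apply: nearW.
by move=> P oP; apply: sW; apply: filterS oP => k Pk _.
Qed.

(* Eberlein-Smulian for reflexive spaces: a weak ultrafilter limit [y] lies in
   the closed span of the sequence, which is separable; a diagonal subsequence
   converges against countably many functionals separating that closed span,
   and every other weak ultrafilter limit of the subsequence must then be [y]. *)
Lemma reflexive_weak_cvg_subseq {R : realType} {X : normedModType R} (xs : nat -> X) :
  reflexive_space X -> (exists z : X, z != 0) -> (forall n, `|xs n| <= 1) ->
  exists phi : nat -> nat, (forall k, (k <= phi k)%N) /\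
    exists x, weak_cvg (fun k => xs (phi k)) x.
Proof.
move=> reflX nz xs1.
have [U [UU oU]] := ultraFilterLemma (@eventually_filter).
have [y wy] := reflexive_ultra_weak_lim reflX nz UU xs1.
have [g hg] := choice (fun m => norming_functional (qcomb_enum xs m)).
have dg m : dual_elt (g m) by case: (hg m).
have [phi [phi_ge gphi]] := ultra_diagonal_subseq _ oU (fun m => wy _ (dg m)).
exists phi; split=> //; exists y => f df.
apply: contrapT => /not_cvg_far_ultra [eps eps0 [V [VU oV far]]].
have [z wz] := reflexive_ultra_weak_lim reflX nz VU (fun k => xs1 (phi k)).
have zy : z = y.
  apply: (norming_seq_separates hg).
  - exact: span_dist_weak_lim _ (fun k => in_span_gen xs (phi k)) wz.
  - exact: span_dist_weak_lim _ (in_span_gen xs) wy.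
  move=> m; apply: (cvg_unique (@Rhausdorff R) (wz _ (dg m))).
  exact: cvg_trans (cvg_fmap2 oV) (gphi m).
have near_fy : \forall k \near V, `|f y - f (xs (phi k))| < eps.
  by rewrite -zy; apply: cvgr_dist_lt; [exact: wz|].
have [k [far_k near_k]] := filter_ex (filterI far near_fy).
by move: far_k; rewrite /= leNgt near_k.
Qed.

Lemma cvg_subseq {T : topologicalType} (a : nat -> T) (phi : nat -> nat) (l : T) :
  (forall k, (k <= phi k)%N) -> a @ \oo --> l -> (fun k => a (phi k)) @ \oo --> l.
Proof.
move=> phi_ge al; apply: cvg_comp al => P [N _ NP].
by exists N => // k /= Nk; apply: NP; exact: leq_trans Nk (phi_ge k).
Qed.

(** * Compact operators *)

Section Operators.
Context {R : realType} {X Y : normedModType R}.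

Lemma dim_gt1_nonzero : dim_gt1 X -> exists z : X, z != 0.
Proof.
move=> [a [b ab]]; exists a; apply/eqP => a0.
have := ab 1 0; rewrite a0 scaler0 scale0r addr0 => /(_ erefl) [/eqP].
by rewrite oner_eq0.
Qed.

Lemma weak_cvg_norm_le (u : nat -> X) x (c : R) :
  weak_cvg u x -> (forall n, `|u n| <= c) -> `|x| <= c.
Proof.
move=> wu uc; have [g [dg gx gb]] := norming_functional x.
rewrite -gx; apply: ler_cvg_to (wu g dg) (cvg_cst c) _.
by apply: nearW => n; apply: le_trans (ler_norm _) (le_trans (gb _) (uc n)).
Qed.

Lemma weak_lim_unique {I : Type} (F : set_system I) {PF : ProperFilter F}
    (w : I -> Y) (y z : Y) :
  w @ F --> y -> (forall f, dual_elt f -> (fun i => f (w i)) @ F --> f z) -> y = z.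
Proof.
move=> wy wz; have [h [dh hyz _]] := norming_functional (y - z).
apply/eqP; rewrite -subr_eq0 -normr_eq0 -hyz dualB // subr_eq0; apply/eqP.
exact: (cvg_unique (@Rhausdorff R) (@continuous_cvg _ _ _ F _ w h y (dh.2 y) wy) (wz h dh)).
Qed.

Lemma is_linear_weak_cvg (T : X -> Y) (K : R) (u : nat -> X) x :
  is_linear T -> (forall z, `|T z| <= K * `|z|) ->
  weak_cvg u x -> weak_cvg (fun n => T (u n)) (T x).
Proof.
move=> linT TK wu h dh; have [M M0 hM] := dual_bounded dh.
apply: (wu (fun z => h (T z))); split=> [c z w|].
  by rewrite /= linT; exact: dh.1.
apply: (is_linear_bounded_continuous (K := M * K)) => [c z w|z].
  by rewrite /= linT; exact: dh.1.
by rewrite -mulrA; apply: le_trans (hM _) (ler_wpM2l M0 (TK z)).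
Qed.

Lemma opnorm_ge (T : X -> Y) x : is_linear T ->
  has_ubound [set `|T z| | z in [set z : X | `|z| <= 1]] -> `|T x| <= opnorm T * `|x|.
Proof.
move=> linT ub; have [->|x0] := eqVneq x 0; first by rewrite is_linear0 // !normr0 mulr0.
have nx : 0 < `|x| by rewrite normr_gt0.
have -> : `|T x| = `|T (`|x|^-1 *: x)| * `|x|.
  by rewrite (is_linearZ linT) normrZ gtr0_norm ?invr_gt0 // mulrAC mulVf ?gt_eqF ?mul1r.
rewrite ler_pM2r //; apply: (ub_le_sup ub); exists (`|x|^-1 *: x) => //=.
by rewrite normrZ gtr0_norm ?invr_gt0 // mulVf ?gt_eqF.
Qed.

Lemma compact_operator_ubound (T : X -> Y) : compact_operator T ->
  has_ubound [set `|T x| | x in [set x : X | `|x| <= 1]].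
Proof.
move=> [_ cT]; have [M [_ hM]] := compact_bounded cT.
exists (M + 1) => _ [x x1 <-]; apply: hM; first by rewrite ltrDl.
by apply: subset_closure; exists x.
Qed.

(* Along an ultrafilter the images [T (u n)] converge in norm, by compactness,
   and the limit must be the weak limit [T x]. *)
Lemma compact_operator_weak_cvg_norm (T : X -> Y) (u : nat -> X) x (l : R) :
  compact_operator T -> weak_cvg u x -> (forall n, `|u n| <= 1) ->
  (fun n => `|T (u n)|) @ \oo --> l -> `|T x| = l.
Proof.
move=> cT wu u1 Tul.
have [W [WU oW]] := ultraFilterLemma (@eventually_filter).
have TuK n : closure (T @` [set z : X | `|z| <= 1]) (T (u n)).
  by apply: subset_closure; exists (u n); first exact: u1.
have [y _ Tuy] := ultra_compact_lim WU cT.2 TuK.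
have T_le z : `|T z| <= opnorm T * `|z|.
  exact: opnorm_ge cT.1 (compact_operator_ubound cT).
have wTu := is_linear_weak_cvg cT.1 T_le wu.
have <- : y = T x.
  by apply: (weak_lim_unique Tuy) => f df; exact: cvg_trans (cvg_fmap2 oW) (wTu f df).
have TulW : (fun n => `|T (u n)|) @ W --> l := cvg_trans (cvg_fmap2 oW) Tul.
have nTuy : (fun n => `|T (u n)|) @ W --> `|y| by apply: cvg_norm.
exact (cvg_unique (@Rhausdorff R) nTuy TulW).
Qed.

Lemma sBPBp_failure (T : X -> Y) (eps : R) :
  ~ (exists eta : R, 0 < eta /\ forall x0 : X, `|x0| = 1 -> `|T x0| > 1 - eta ->
       exists x1 : X, `|x1| = 1 /\ `|T x1| = 1 /\ `|x1 - x0| < eps) ->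
  forall n, exists x0 : X, [/\ `|x0| = 1, 1 - harmonic n < `|T x0|
    & forall x1, `|x1| = 1 -> `|T x1| = 1 -> eps <= `|x1 - x0|].
Proof.
move=> no_eta n; apply: contrapT => nfar; apply: no_eta.
exists (harmonic n); split=> [|x0 x01 Tx0]; first exact: harmonic_gt0.
apply: contrapT => nx1; apply: nfar; exists x0; split=> // x1 x11 Tx11.
by rewrite leNgt; apply/negP => lt; apply: nx1; exists x1.
Qed.

End Operators.

Theorem theorem2p12 (R : realType) (X Y : completeNormedModType R) :
  reflexive_space X -> kadets_klee X -> dim_gt1 X -> dim_gt1 Y ->
  sBPBp_compact X Y.
Proof.
move=> reflX KK /dim_gt1_nonzero nz _ eps eps0 T cT nT.
have T_le x : `|T x| <= `|x|.
  by rewrite -[`|x|]mul1r -nT; exact: opnorm_ge cT.1 (compact_operator_ubound cT).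
apply: contrapT => /sBPBp_failure /choice [xs hxs].
have xs1 n : `|xs n| = 1 by case: (hxs n).
have xs_le1 n : `|xs n| <= 1 by rewrite xs1.
have Txs1 : (fun n => `|T (xs n)|) @ \oo --> (1 : R).
  apply: (@squeeze_cvgr _ _ _ _ (fun n => 1 - harmonic n) (fun=> 1)).
  - by apply: nearW => n; case: (hxs n) => _ /ltW -> _ /=; rewrite -[leRHS](xs1 n) T_le.
  - by rewrite -[X in _ --> X]subr0; apply: cvgB; [exact: cvg_cst|exact: cvg_harmonic].
  - exact: cvg_cst.
have [phi [phi_ge [x wx]]] := reflexive_weak_cvg_subseq reflX nz xs_le1.
have Tx1 := compact_operator_weak_cvg_norm cT wx (fun=> xs_le1 _) (cvg_subseq phi_ge Txs1).
have x1 : `|x| = 1.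
  by apply/eqP; rewrite eq_le (weak_cvg_norm_le wx (fun k => xs_le1 _)) -Tx1 T_le.
have : (fun k => `|xs (phi k) - x|) @ \oo --> 0.
  apply: KK wx _; under eq_fun do rewrite xs1 -x1; exact: cvg_cst.
move=> /cvgr_dist_lt /(_ _ eps0) /filter_ex [k]; rewrite sub0r normrN normr_id distrC.
by case: (hxs (phi k)) => _ _ /(_ x x1 Tx1) /le_lt_trans /[apply]; rewrite ltxx.
Qed.
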